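(* Let $c$ be constant. Then for all integers $a\ge b\ge0$, $$Y(z^a\bar z^b)=az^{a-1}\bar z^b-mc\sum_{0\le k\le (a-b-1)/m}(-1)^{mk}z^{a-mk-1}\bar z^{b+mk},$$ and for all integers $b\ge a\ge0$, $$Y(z^a\bar z^b)=az^{a-1}\bar z^b+mc\sum_{1\le k\le (b-a)/m}(-1)^{mk}z^{a+mk-1}\bar z^{b-mk}.$$
   Context: Let $m\ge2$, $\zeta=e^{2\pi i/m}$, and let $z,\bar z$ be independent variables. For $j=0,\dots,m-1$ let $s_j$ be the algebra automorphism of $\mathbb C[z,\bar z]$ with $s_j(z)=-\zeta^j\bar z$, $s_j(\bar z)=-\zeta^{-j}z$ (these generate the dihedral group $I_2(m)$; the $s_j$ are its reflections). For a constant $c\in\mathbb C$ define the (Dunkl) operator $Y$ on $\mathbb C[z,\bar z]$ by $Y(q)=\frac{\partial q}{\partial z}-c\sum_{j=0}^{m-1}\frac{q-s_j(q)}{z+\zeta^j\bar z}$. *)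

(* Polynomials in two independent variables z, zbar are represented as
   {poly {poly C}}: the OUTER variable is z, the INNER variable is zbar. *)
From mathcomp Require Import all_boot all_algebra.
From mathcomp Require Import reals trigo.
From mathcomp Require Export complex.
Import GRing.Theory Num.Theory.
Local Open Scope ring_scope.

Set Implicit Arguments.
Unset Strict Implicit.
Unset Printing Implicit Defensive.

Definition zeta (R : realType) (m : nat) : R[i] :=
  (cos (2 * pi / m%:R) +i* sin (2 * pi / m%:R))%C.

Definition Zv (R : realType) : {poly {poly R[i]}} := 'X.
Definition Zbv (R : realType) : {poly {poly R[i]}} := ('X)%:P.
Definition cst (R : realType) (a : R[i]) : {poly {poly R[i]}} := a%:P%:P.

Definition ev2 (R : realType) (q u v : {poly {poly R[i]}}) : {poly {poly R[i]}} :=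
  \sum_(i < size q) \sum_(k < size q`_i) cst ((q`_i)`_k) * u ^+ i * v ^+ k.

Definition refl (R : realType) (m j : nat) (q : {poly {poly R[i]}}) :=
  ev2 q (- cst (zeta R m ^+ j) * Zbv R) (- cst (zeta R m ^- j) * Zv R).

(* the Dunkl operator Y; q^`() is d/dz (derivative in the outer variable z);
   the quotient by z + zeta^j zbar (monic in z) is exact. *)
Definition dunklY (R : realType) (m : nat) (c : R[i]) (q : {poly {poly R[i]}}) :=
  q^`() - cst c * \sum_(j < m) ((q - refl m j q) %/ (Zv R + cst (zeta R m ^+ j) * Zbv R)).

(* The reflection s_j sends z^a zbar^b to (-zeta^j zbar)^a (-zeta^-j z)^b, and the two
   reflected variables multiply to z zbar.  Hence z^a zbar^b - s_j(z^a zbar^b) is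
   (z zbar)^min(a,b) times a difference of |a - b|-th powers, which factors through the
   mirror form z + zeta^j zbar as a geometric sum whose i-th term carries the weight
   zeta^(+-ij).  Summing over the m reflections, the character sums
   sum_j zeta^(ij) = m [m | i] keep exactly the terms with m | i. *)
From HB Require Import structures.
From mathcomp Require Import all_boot all_algebra.
From mathcomp Require Import reals trigo complex.
From mathcomp Require Import order ring lra zify.
Import Order.TTheory GRing.Theory Num.Theory.
Local Open Scope ring_scope.

HB.instance Definition _ (R : realType) :=
  GRing.RMorphism.copy (@cst R) (polyC \o polyC).

Section RootsOfUnity.
Variable R : realType.

Lemma cos_sin_exprn (t : R) i :
  (cos t +i* sin t)%C ^+ i = (cos (t * i%:R) +i* sin (t * i%:R))%C.
Proof.
elim: i => [|i IH]; first by rewrite expr0 mulr0 cos0 sin0.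
rewrite exprS IH -addn1 natrD mulrDr mulr1 cosD sinD.
by apply/eqP; rewrite eq_complex /=; apply/andP; split; apply/eqP; ring.
Qed.

Lemma cos_lt1 (x : R) : 0 < x < pi *+ 2 -> cos x < 1.
Proof.
move=> /andP[x_gt0 x_lt2pi].
have sin_half_gt0 : 0 < sin (x / 2).
  by apply: sin_gt0_pi; rewrite divr_gt0 //= ltr_pdivrMr // mulr_natr.
have -> : x = x / 2 + x / 2 by field.
rewrite cosD -!expr2 cos2sin2.
have : 0 < sin (x / 2) ^+ 2 by rewrite exprn_gt0.
lra.
Qed.

Lemma sum_exprs_unity_root (F : idomainType) (x : F) n : x ^+ n = 1 ->
  \sum_(j < n) x ^+ j = if x == 1 then n%:R else 0.
Proof.
move=> xn1; case: eqP => [-> | /eqP x_neq1].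
  by under eq_bigr do rewrite expr1n; rewrite sumr_const card_ord.
apply/eqP; have /esym/eqP := subrX1 x n.
by rewrite xn1 subrr mulf_eq0 subr_eq0 (negbTE x_neq1).
Qed.

Variable m : nat.
Hypothesis m_gt0 : (0 < m)%N.
Local Notation zeta := (zeta R m).

Lemma zeta_prim : m.-primitive_root zeta.
Proof.
have angle_lt i : (i < m)%N -> 2 * pi / m%:R * i%:R < pi *+ 2 :> R.
  move=> lt_im; rewrite mulrAC ltr_pdivrMr ?ltr0n // -[pi *+ 2]mulr_natl.
  by rewrite ltr_pM2l ?ltr_nat // mulr_gt0 ?pi_gt0.
apply/andP; split => //; apply/forallP => -[i /= lt_im]; rewrite unity_rootE.
rewrite /zeta cos_sin_exprn; case: (i.+1 =P m) => [<- | ne_im].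
  by rewrite mulfVK ?pnatr_eq0 // mulrC mulr_natr cos2pi sin2pi eqxx.
rewrite eqbF_neg eq_complex negb_and lt_eqF ?cos_lt1 //.
rewrite angle_lt ?andbT; last by rewrite ltn_neqAle lt_im andbT; exact/eqP.
by rewrite !mulr_gt0 ?invr_gt0 ?ltr0n ?pi_gt0.
Qed.

Lemma zeta_neq0 j : zeta ^+ j != 0.
Proof. by rewrite expf_neq0 // (prim_root_eq0 zeta_prim) -lt0n. Qed.

Lemma sum_zeta_exprM i :
  \sum_(j < m) (zeta ^+ j) ^+ i = if (m %| i)%N then m%:R else 0.
Proof.
have zeta_i_root : (zeta ^+ i) ^+ m = 1.
  by rewrite exprAC (prim_expr_order zeta_prim) expr1n.
under eq_bigr do rewrite exprAC.
by rewrite sum_exprs_unity_root // -(prim_order_dvd zeta_prim).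
Qed.

Lemma sum_zeta_exprVM i :
  \sum_(j < m) (zeta ^- j) ^+ i = if (m %| i)%N then m%:R else 0.
Proof.
have zetaV_i_root : ((zeta^-1) ^+ i) ^+ m = 1.
  by rewrite exprAC exprVn (prim_expr_order zeta_prim) invr1 expr1n.
under eq_bigr do rewrite -exprVn exprAC.
by rewrite sum_exprs_unity_root // exprVn invr_eq1 -(prim_order_dvd zeta_prim).
Qed.
End RootsOfUnity.

Lemma big_ord_dvdn (V : nmodType) (F : nat -> V) m n N : (0 < m)%N -> (n <= N)%N ->
  \sum_(i < n) (if (m %| i)%N then F i else 0) =
  \sum_(k < N | (m * k < n)%N) F (m * k)%N.
Proof.
move=> m_gt0; elim: n => [|n IHn] le_nN.
  by rewrite big_ord0 big_pred0 // => k; rewrite ltn0.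
rewrite big_ord_recr /= IHn ?(ltnW le_nN) //.
rewrite [RHS](bigID (fun k : 'I_N => (m * k < n)%N)) /=; congr (_ + _).
  by apply: eq_bigl => k; case: ltnP => lt_kn; rewrite ?andbF // andbT ltnS ltnW.
case: ifP => [dvd_mn | ndvd_mn].
  have lt_qN : (n %/ m < N)%N by apply: leq_ltn_trans (leq_div n m) le_nN.
  rewrite (big_pred1 (Ordinal lt_qN)); first by rewrite /= mulnC divnK.
  move=> k /=; rewrite ltnS -leqNgt -eqn_leq -(inj_eq val_inj) /=.
  by rewrite -{1}(divnK dvd_mn) mulnC eqn_pmul2r.
rewrite big_pred0 // => k; rewrite ltnS -leqNgt -eqn_leq.
by apply/negbTE; apply: contraFN ndvd_mn => /eqP <-; rewrite dvdn_mulr.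
Qed.

Lemma big_ord_dvdnS (V : zmodType) (F : nat -> V) m n : (0 < m)%N ->
  \sum_(i < n) (if (m %| i.+1)%N then F i.+1 else 0) =
  \sum_(1 <= k < n.+1 | (m * k <= n)%N) F (m * k)%N.
Proof.
move=> m_gt0; apply: (@addrI _ (F 0%N)).
have := @big_ord_dvdn V F _ _ _ m_gt0 (leqnn n.+1).
rewrite big_ord_recl dvdn0 -(big_mkord (fun k => m * k < n.+1)%N (fun k => F (m * k)%N)).
rewrite big_ltn_cond // muln0 /= => ->.
by under eq_bigl do rewrite ltnS.
Qed.

Section ReflectedMonomials.
Variables (T : comRingType) (Z W e e' : T).
Hypothesis ee' : e * e' = 1.

Let mul_reflected : (- e * W) * (- e' * Z) = Z * W.
Proof. by rewrite mulrACA mulrNN ee' mul1r mulrC. Qed.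

Lemma monomial_sub_reflect_ge a b : (b <= a)%N ->
  Z ^+ a * W ^+ b - (- e * W) ^+ a * (- e' * Z) ^+ b =
  (\sum_(i < a - b) e ^+ i * ((-1) ^+ i * Z ^+ (a - i - 1) * W ^+ (b + i)))
  * (Z + e * W).
Proof.
move=> le_ba; move: (a - b)%N (subnK le_ba) => n <-.
transitivity ((Z ^+ n - (- e * W) ^+ n) * (Z * W) ^+ b).
  have -> : (- e * W) ^+ (n + b) * (- e' * Z) ^+ b = (- e * W) ^+ n * (Z * W) ^+ b.
    by rewrite exprD -mulrA -exprMn mul_reflected.
  by rewrite exprD [(Z * W) ^+ _]exprMn; ring.
transitivity ((\sum_(i < n) Z ^+ (n.-1 - i) * (- e * W) ^+ i * (Z * W) ^+ b)
              * (Z + e * W)).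
  by rewrite subrXX -mulr_suml; ring.
congr (_ * _); apply: eq_bigr => i _.
have -> : (n + b - i - 1 = n.-1 - i + b)%N by have := ltn_ord i; lia.
by rewrite !exprMn [(- e) ^+ _]exprNn !exprD; ring.
Qed.

(* The summand is written as a function of k = i.+1, the index of the final formula. *)
Lemma monomial_sub_reflect_le a b : (a <= b)%N ->
  Z ^+ a * W ^+ b - (- e * W) ^+ a * (- e' * Z) ^+ b =
  - (\sum_(i < b - a)
       e' ^+ i.+1 * ((-1) ^+ i.+1 * Z ^+ (a + i.+1 - 1) * W ^+ (b - i.+1)))
  * (Z + e * W).
Proof.
move=> le_ab; move: (b - a)%N (subnK le_ab) => n <-.
transitivity ((W ^+ n - (- e' * Z) ^+ n) * (Z * W) ^+ a).
  rewrite addnC !exprD.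
  have -> : (- e * W) ^+ a * ((- e' * Z) ^+ a * (- e' * Z) ^+ n) =
            (Z * W) ^+ a * (- e' * Z) ^+ n by rewrite mulrA -exprMn mul_reflected.
  by rewrite [(Z * W) ^+ _]exprMn; ring.
transitivity ((\sum_(i < n) e' * (W ^+ (n.-1 - i) * (- e' * Z) ^+ i) * (Z * W) ^+ a)
              * (Z + e * W)).
  rewrite subrXX.
  have -> : W - (- e' * Z) = e' * (Z + e * W).
    by rewrite mulNr opprK mulrDr mulrA [e' * e]mulrC ee' mul1r addrC.
  by rewrite -mulr_suml -mulr_sumr; ring.
rewrite -sumrN.
congr (_ * _); apply: eq_bigr => i _.
have -> : (n + a - i.+1 = n.-1 - i + a)%N by have := ltn_ord i; lia.
have -> : (a + i.+1 - 1 = a + i)%N by lia.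
by rewrite !exprMn [(- e') ^+ _]exprNn !exprD !exprS; ring.
Qed.
End ReflectedMonomials.

Section DunklMonomials.
Variables (R : realType) (m : nat) (c : R[i]).
Hypothesis m_gt0 : (0 < m)%N.
Local Notation Z := (Zv R).
Local Notation W := (Zbv R).
Local Notation zeta := (zeta R m).

Definition divdiff j (q : {poly {poly R[i]}}) :=
  (q - refl m j q) %/ (Z + cst (zeta ^+ j) * W).

Lemma dunklYE q : dunklY m c q = q^`() - cst c * \sum_(j < m) divdiff j q.
Proof. by []. Qed.

Lemma deriv_monomial a b : (Z ^+ a * W ^+ b)^`() = a%:R * Z ^+ a.-1 * W ^+ b.
Proof. by rewrite derivM /Zbv -rmorphXn derivC mulr0 addr0 /Zv derivXn mulr_natl. Qed.

Lemma ev2_monomial a b u v : ev2 (Z ^+ a * W ^+ b) u v = u ^+ a * v ^+ b.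
Proof.
rewrite /ev2 /Zv /Zbv -rmorphXn mulrC mul_polyC.
have Xb_neq0 : ('X^b : {poly R[i]}) != 0 by rewrite monic_neq0 ?monicXn.
rewrite size_scale // size_polyXn big_ord_recr /= big1 ?add0r; last first.
  by move=> i _; rewrite !coefE ltn_eqF // mulr0 size_poly0 big_ord0.
rewrite !coefE eqxx mulr1 size_polyXn big_ord_recr /= big1 ?add0r.
  by rewrite coefXn eqxx rmorph1 mul1r.
by move=> k _; rewrite coefXn ltn_eqF // rmorph0 !mul0r.
Qed.

Lemma refl_monomial j a b : refl m j (Z ^+ a * W ^+ b) =
  (- cst (zeta ^+ j) * W) ^+ a * (- cst (zeta ^- j) * Z) ^+ b.
Proof. exact: ev2_monomial. Qed.

Lemma mirror_form_monic x : (Z + cst x * W) \is monic.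
Proof. by rewrite /Zv /Zbv /cst -rmorphM; exact: monicXaddC. Qed.

Lemma cst_zeta_exprV j : cst (zeta ^+ j) * cst (zeta ^- j) = 1.
Proof. by rewrite -rmorphM mulfV ?rmorph1 ?zeta_neq0. Qed.

Lemma divdiff_monomial_ge j a b : (b <= a)%N ->
  divdiff j (Z ^+ a * W ^+ b) =
  \sum_(i < a - b) cst ((zeta ^+ j) ^+ i) * ((-1) ^+ i * Z ^+ (a - i - 1) * W ^+ (b + i)).
Proof.
move=> le_ba; rewrite /divdiff refl_monomial.
rewrite monomial_sub_reflect_ge ?cst_zeta_exprV // Pdiv.IdomainMonic.mulpK ?mirror_form_monic //.
by apply: eq_bigr => i _; rewrite [in RHS]rmorphXn.
Qed.

Lemma divdiff_monomial_le j a b : (a <= b)%N ->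
  divdiff j (Z ^+ a * W ^+ b) =
  - \sum_(i < b - a) cst ((zeta ^- j) ^+ i.+1) *
      ((-1) ^+ i.+1 * Z ^+ (a + i.+1 - 1) * W ^+ (b - i.+1)).
Proof.
move=> le_ab; rewrite /divdiff refl_monomial.
rewrite monomial_sub_reflect_le ?cst_zeta_exprV //.
rewrite Pdiv.IdomainMonic.mulpK ?mirror_form_monic //.
by congr (- _); apply: eq_bigr => i _; rewrite [in RHS]rmorphXn.
Qed.

Lemma sum_zeta_series (F : nat -> {poly {poly R[i]}}) n :
  \sum_(j < m) \sum_(i < n) cst ((zeta ^+ j) ^+ i) * F i =
  m%:R * \sum_(k < n | (m * k < n)%N) F (m * k)%N.
Proof.
rewrite exchange_big -(@big_ord_dvdn _ F _ _ _ m_gt0 (leqnn n)) mulr_sumr /=.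
apply: eq_bigr => i _; rewrite -mulr_suml -rmorph_sum sum_zeta_exprM //.
by case: ifP; rewrite ?rmorph_nat ?rmorph0 ?mul0r ?mulr0.
Qed.

Lemma sum_zetaV_series (F : nat -> {poly {poly R[i]}}) n :
  \sum_(j < m) \sum_(i < n) cst ((zeta ^- j) ^+ i.+1) * F i.+1 =
  m%:R * \sum_(1 <= k < n.+1 | (m * k <= n)%N) F (m * k)%N.
Proof.
rewrite exchange_big -(@big_ord_dvdnS _ F _ n m_gt0) mulr_sumr /=.
apply: eq_bigr => i _; rewrite -mulr_suml -rmorph_sum sum_zeta_exprVM //.
by case: ifP; rewrite ?rmorph_nat ?rmorph0 ?mul0r ?mulr0.
Qed.

Lemma sum_divdiff_monomial_ge a b : (b <= a)%N ->
  \sum_(j < m) divdiff j (Z ^+ a * W ^+ b) =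
  m%:R * \sum_(k < a - b | (m * k < a - b)%N)
           (-1) ^+ (m * k) * Z ^+ (a - m * k - 1) * W ^+ (b + m * k).
Proof.
move=> le_ba; under eq_bigr do rewrite divdiff_monomial_ge //.
exact: (sum_zeta_series (fun i => (-1) ^+ i * Z ^+ (a - i - 1) * W ^+ (b + i))).
Qed.

Lemma sum_divdiff_monomial_le a b : (a <= b)%N ->
  \sum_(j < m) divdiff j (Z ^+ a * W ^+ b) =
  - (m%:R * \sum_(1 <= k < (b - a).+1 | (m * k <= b - a)%N)
              (-1) ^+ (m * k) * Z ^+ (a + m * k - 1) * W ^+ (b - m * k)).
Proof.
move=> le_ab; under eq_bigr do rewrite divdiff_monomial_le //.
rewrite sumrN; congr (- _).
exact: (sum_zetaV_series (fun i => (-1) ^+ i * Z ^+ (a + i - 1) * W ^+ (b - i))).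
Qed.
End DunklMonomials.

Theorem proposition2p3 (R : realType) (m : nat) (c : R[i]) :
  (2 <= m)%N ->
  (forall a b : nat, (b <= a)%N ->
     dunklY m c (Zv R ^+ a * Zbv R ^+ b) =
       a%:R * Zv R ^+ a.-1 * Zbv R ^+ b
       - cst (m%:R * c) *
         \sum_(k < a - b | (m * k < a - b)%N)
            (-1) ^+ (m * k) * Zv R ^+ (a - m * k - 1) * Zbv R ^+ (b + m * k))
  /\
  (forall a b : nat, (a <= b)%N ->
     dunklY m c (Zv R ^+ a * Zbv R ^+ b) =
       a%:R * Zv R ^+ a.-1 * Zbv R ^+ b
       + cst (m%:R * c) *
         \sum_(1 <= k < (b - a).+1 | (m * k <= b - a)%N)
            (-1) ^+ (m * k) * Zv R ^+ (a + m * k - 1) * Zbv R ^+ (b - m * k)).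
Proof.
move=> /ltnW m_gt0.
have cst_mc : cst (m%:R * c) = m%:R * cst c by rewrite rmorphM rmorph_nat.
split=> a b le_ab; rewrite dunklYE deriv_monomial cst_mc.
  by rewrite sum_divdiff_monomial_ge // mulrCA mulrA.
by rewrite sum_divdiff_monomial_le // mulrN opprK mulrCA mulrA.
Qed.
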